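(* Let $A$ be any of $L_d$, $C_d$ ($d\in\{2,3,\dots\}$), or $L_\infty$, and let $p\in[1,\infty)\setminus\{2\}$. Then there exists an injective free spatial representation of $A$ on $l^p(\mathbb{Z}_{>0})$.
   Context: $L_d$ is the universal complex unital algebra generated by $s_1,\dots,s_d,t_1,\dots,t_d$ with $t_js_j=1$, $t_js_k=0$ ($j\ne k$), $\sum_js_jt_j=1$; $C_d$ has the same generators with only $t_js_j=1$, $t_js_k=0$ ($j\ne k$); $L_\infty$ is on $s_1,s_2,\dots,t_1,t_2,\dots$ with $t_js_j=1$, $t_js_k=0$ ($j\ne k$). A representation is a unital algebra homomorphism into $L(E)$. A representation $\rho$ on $L^p(X,\mu)$ is free if there is a measurable partition $X=\coprod_{m\in\mathbb{Z}}E_m$ with $\rho(s_j)(L^p(E_m,\mu))\subset L^p(E_{m+1},\mu)$ and $\rho(t_j)(L^p(E_m,\mu))\subset L^p(E_{m-1},\mu)$ for all $m$ and $j$ (here $L^p(E,\mu)$ is the subspace of functions vanishing off $E$). $\rho$ is spatial if each $\rho(s_j)$, $\rho(t_j)$ is a spatial partial isometry with $\rho(t_j)$ the reverse of $\rho(s_j)$. Spatial partial isometries: Let $(X,\mathcal{B},\mu)$, $(Y,\mathcal{C},\nu)$ be $\sigma$-finite measure spaces, $\mathcal{N}(\mu)$ the $\mu$-null sets, $\mathcal{B}/\mathcal{N}(\mu)$ the Boolean $\sigma$-algebra of measurable sets modulo null sets. A measurable set transformation is a map $S\colon\mathcal{B}/\mathcal{N}(\mu)\to\mathcal{C}/\mathcal{N}(\nu)$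 which is a Boolean algebra homomorphism preserving countable unions; it induces a unique linear map $S_*$ on measurable functions mod a.e. equality with $S_*(\chi_E)=\chi_{S(E)}$ preserving a.e. limits of sequences; for bijective $S$, $S_*(\mu)(F)=\mu(E)$ when $S([E])=[F]$. A spatial system is $(E,F,S,g)$ with $E\in\mathcal{B}$, $F\in\mathcal{C}$, $S$ a bijective measurable set transformation from $(E,\mu|_E)$ to $(F,\nu|_F)$, $g$ measurable on $F$ with $|g|=1$ a.e.; the associated spatial partial isometry is $(s\xi)(y)=g(y)[\tfrac{dS_*(\mu|_E)}{d\nu|_F}(y)]^{1/p}S_*(\xi|_E)(y)$ on $F$ and $0$ off $F$; its reverse has spatial system $(F,E,S^{-1},(S^{-1})_*(g)^{-1})$. *)

From Stdlib Require Import Bool Reals ZArith.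
Open Scope R_scope.

Definition C : Type := (R * R)%type.
Definition C0 : C := (0, 0).
Definition C1 : C := (1, 0).
Definition RtoC (r : R) : C := (r, 0).
Definition Cadd (z w : C) : C := (fst z + fst w, snd z + snd w).
Definition Cmul (z w : C) : C :=
  (fst z * fst w - snd z * snd w, fst z * snd w + snd z * fst w).
Definition Copp (z : C) : C := (- fst z, - snd z).
Definition Cmod (z : C) : R := sqrt (fst z ^ 2 + snd z ^ 2).
Definition Cinv (z : C) : C :=
  (fst z / (fst z ^ 2 + snd z ^ 2), - snd z / (fst z ^ 2 + snd z ^ 2)).
Definition Cconv (u : nat -> C) (l : C) : Prop :=
  Un_cv (fun n => fst (u n)) (fst l) /\ Un_cv (fun n => snd (u n)) (snd l).

(** real power with the convention 0^y = 0 (x <= 0 gives 0) *)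
Definition rpow (x y : R) : R := if Rle_dec x 0 then 0 else Rpower x y.

(** * The measure space: X = Z_{>0}, encoded as nat (n stands for n+1),
    with counting measure. Every subset is measurable, the only null set is
    the empty set, so B/N(mu) is the power set; subsets are nat -> bool. *)
Definition nset := nat -> bool.
Definition subset (A B : nset) : Prop := forall x, A x = true -> B x = true.
Definition seteq (A B : nset) : Prop := forall x, A x = B x.
Definition indic (A : nset) : nat -> C := fun x => if A x then C1 else C0.
Definition restrict (A : nset) (f : nat -> C) : nat -> C :=
  fun x => if A x then f x else C0.

Fixpoint psum (f : nat -> R) (A : nset) (n : nat) : R :=
  match n with
  | O => 0
  | Datatypes.S m => psum f A m + (if A m then f m else 0)
  end.

(** For nonnegative f, g: sum_{x in A} f x = sum_{y in B} g y in [0, oo]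
    (both partial-sum sequences are nondecreasing, so they either converge
    to the same limit or both diverge). *)
Definition ext_sum_eq (f : nat -> R) (A : nset) (g : nat -> R) (B : nset) : Prop :=
  forall l, Un_cv (psum f A) l <-> Un_cv (psum g B) l.

Definition pnorm_partial (p : R) (f : nat -> C) (n : nat) : R :=
  psum (fun k => rpow (Cmod (f k)) p) (fun _ => true) n.
Definition in_lp (p : R) (f : nat -> C) : Prop :=
  exists M, forall n, pnorm_partial p f n <= M.

(** operators; an element of L(l^p) is an op that is linear, maps l^p to
    l^p and is bounded; two ops are equal in L(l^p) if they agree on l^p. *)
Definition op := (nat -> C) -> (nat -> C).
Definition bounded_op (p : R) (T : op) : Prop :=
  (forall f, in_lp p f -> in_lp p (T f)) /\
  (forall f g, in_lp p f -> in_lp p g -> forall x,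
      T (fun y => Cadd (f y) (g y)) x = Cadd (T f x) (T g x)) /\
  (forall c f, in_lp p f -> forall x,
      T (fun y => Cmul c (f y)) x = Cmul c (T f x)) /\
  (exists K, 0 <= K /\ forall f M, (forall n, pnorm_partial p f n <= M) ->
      forall n, pnorm_partial p (T f) n <= K * M).
Definition opeq (p : R) (T1 T2 : op) : Prop :=
  forall f, in_lp p f -> forall x, T1 f x = T2 f x.

(** Sg : measurable set transformation from (E, mu|_E) to (F, nu|_F):
    a Boolean sigma-homomorphism of the (restricted) algebras mod null sets. *)
Definition is_mst (E F : nset) (Sg : nset -> nset) : Prop :=
  (forall A B, subset A E -> seteq A B -> seteq (Sg A) (Sg B)) /\
  (forall A, subset A E -> subset (Sg A) F) /\
  seteq (Sg E) F /\
  (forall A, subset A E ->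
     seteq (Sg (fun x => E x && negb (A x))) (fun y => F y && negb (Sg A y))) /\
  (forall A B, subset A E -> subset B E ->
     seteq (Sg (fun x => A x && B x)) (fun y => Sg A y && Sg B y)) /\
  (forall (An : nat -> nset) (U : nset), (forall n, subset (An n) E) ->
     (forall x, U x = true <-> exists n, An n x = true) ->
     forall y, Sg U y = true <-> exists n, Sg (An n) y = true).

Definition is_bij_mst (E F : nset) (Sg : nset -> nset) : Prop :=
  is_mst E F Sg /\
  (forall A B, subset A E -> subset B E -> seteq (Sg A) (Sg B) -> seteq A B) /\
  (forall B, subset B F -> exists A, subset A E /\ seteq (Sg A) B).

Definition is_inverse (E F : nset) (Sg Sg' : nset -> nset) : Prop :=
  (forall A, subset A E -> seteq (Sg' (Sg A)) A) /\
  (forall B, subset B F -> seteq (Sg (Sg' B)) B).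

(** T is the induced map Sg_* on measurable functions mod a.e. equality *)
Definition is_push (E F : nset) (Sg : nset -> nset) (T : op) : Prop :=
  (forall f g, (forall x, E x = true -> f x = g x) ->
     forall y, F y = true -> T f y = T g y) /\
  (forall A, subset A E -> forall y, F y = true -> T (indic A) y = indic (Sg A) y) /\
  (forall f g y, F y = true ->
     T (fun x => Cadd (f x) (g x)) y = Cadd (T f y) (T g y)) /\
  (forall c f y, F y = true -> T (fun x => Cmul c (f x)) y = Cmul c (T f y)) /\
  (forall (fn : nat -> nat -> C) f,
     (forall x, E x = true -> Cconv (fun n => fn n x) (f x)) ->
     forall y, F y = true -> Cconv (fun n => T (fn n) y) (T f y)).

(** h is the Radon-Nikodym derivative d Sg_*(mu|_E) / d nu|_F :
    Sg_*(mu|_E)(Sg A) = mu(A) = int_{Sg A} h d nu for every A subset of E. *)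
Definition is_RN (E F : nset) (Sg : nset -> nset) (h : nat -> R) : Prop :=
  (forall y, F y = true -> 0 <= h y) /\
  (forall A, subset A E -> ext_sum_eq (fun _ => 1) A h (Sg A)).

Definition unimod (F : nset) (g : nat -> C) : Prop :=
  forall y, F y = true -> Cmod (g y) = 1.

(** the spatial partial isometry associated to (E, F, Sg, g), with
    T = Sg_* and h = dSg_*(mu|_E)/dnu|_F *)
Definition spi (p : R) (E F : nset) (g : nat -> C) (T : op) (h : nat -> R) : op :=
  fun xi y => if F y
    then Cmul (g y) (Cmul (RtoC (rpow (h y) (1 / p))) (T (restrict E xi) y))
    else C0.

(** s is a spatial partial isometry and t is its reverse, whose spatial
    system is (F, E, Sg^{-1}, (Sg^{-1})_*(g)^{-1}) *)
Definition spatial_pair (p : R) (s t : op) : Prop :=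
  exists (E F : nset) (Sg Sg' : nset -> nset) (g : nat -> C) (T T' : op)
         (h h' : nat -> R),
    is_bij_mst E F Sg /\ is_bij_mst F E Sg' /\ is_inverse E F Sg Sg' /\
    is_push E F Sg T /\ is_push F E Sg' T' /\
    is_RN E F Sg h /\ is_RN F E Sg' h' /\ unimod F g /\
    opeq p s (spi p E F g T h) /\
    opeq p t (spi p F E (fun x => Cinv (T' g x)) T' h').

(** * The universal algebras L_d, C_d, L_infty, by generators and relations.
    Generators s_{j+1} = gs j, t_{j+1} = gt j (0-based indices). *)
Inductive gen : Type := gs (j : nat) | gt (j : nat).
Definition gen_idx (a : gen) : nat := match a with gs j => j | gt j => j end.

Inductive term : Type :=
| tgen (a : gen)
| tscal (c : C)          (* c * 1 *)
| tadd (a b : term)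
| tmul (a b : term).

Inductive kind : Type := KL (d : nat) | KC (d : nat) | KLinf.
Definition kind_ok (k : kind) : Prop :=
  match k with KL d => (2 <= d)%nat | KC d => (2 <= d)%nat | KLinf => True end.
Definition gen_ok (k : kind) (a : gen) : Prop :=
  match k with KL d => (gen_idx a < d)%nat | KC d => (gen_idx a < d)%nat
             | KLinf => True end.
Fixpoint term_ok (k : kind) (t : term) : Prop :=
  match t with
  | tgen a => gen_ok k a
  | tscal _ => True
  | tadd a b => term_ok k a /\ term_ok k b
  | tmul a b => term_ok k a /\ term_ok k b
  end.

Fixpoint sum_st (d : nat) : term :=
  match d with
  | O => tscal C0
  | Datatypes.S m => tadd (sum_st m) (tmul (tgen (gs m)) (tgen (gt m)))
  end.

Inductive rel (k : kind) : term -> term -> Prop :=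
| rel_ts j : gen_ok k (gs j) -> rel k (tmul (tgen (gt j)) (tgen (gs j))) (tscal C1)
| rel_tsk j l : gen_ok k (gs j) -> gen_ok k (gs l) -> j <> l ->
    rel k (tmul (tgen (gt j)) (tgen (gs l))) (tscal C0)
| rel_sum d : k = KL d -> rel k (sum_st d) (tscal C1).

(** equality in the universal unital complex algebra: the congruence
    generated by the unital C-algebra axioms and the relations *)
Inductive aeq (k : kind) : term -> term -> Prop :=
| aeq_rel a b : rel k a b -> aeq k a b
| aeq_refl a : aeq k a a
| aeq_sym a b : aeq k a b -> aeq k b a
| aeq_trans a b c : aeq k a b -> aeq k b c -> aeq k a c
| aeq_add a a' b b' : aeq k a a' -> aeq k b b' -> aeq k (tadd a b) (tadd a' b')
| aeq_mul a a' b b' : aeq k a a' -> aeq k b b' -> aeq k (tmul a b) (tmul a' b')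
| aeq_addA a b c : aeq k (tadd a (tadd b c)) (tadd (tadd a b) c)
| aeq_addC a b : aeq k (tadd a b) (tadd b a)
| aeq_add0 a : aeq k (tadd a (tscal C0)) a
| aeq_addN a : aeq k (tadd a (tmul (tscal (Copp C1)) a)) (tscal C0)
| aeq_mulA a b c : aeq k (tmul a (tmul b c)) (tmul (tmul a b) c)
| aeq_mul1l a : aeq k (tmul (tscal C1) a) a
| aeq_mul1r a : aeq k (tmul a (tscal C1)) a
| aeq_mulDl a b c : aeq k (tmul (tadd a b) c) (tadd (tmul a c) (tmul b c))
| aeq_mulDr a b c : aeq k (tmul a (tadd b c)) (tadd (tmul a b) (tmul a c))
| aeq_scal_add c e : aeq k (tadd (tscal c) (tscal e)) (tscal (Cadd c e))
| aeq_scal_mul c e : aeq k (tmul (tscal c) (tscal e)) (tscal (Cmul c e))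
| aeq_scal_comm c a : aeq k (tmul (tscal c) a) (tmul a (tscal c)).

Fixpoint eval (rho : gen -> op) (t : term) : op :=
  match t with
  | tgen a => rho a
  | tscal c => fun f x => Cmul c (f x)
  | tadd a b => fun f x => Cadd (eval rho a f x) (eval rho b f x)
  | tmul a b => fun f => eval rho a (eval rho b f)
  end.

(** rho (on generators) induces a unital algebra homomorphism A -> L(l^p) *)
Definition is_rep (p : R) (k : kind) (rho : gen -> op) : Prop :=
  (forall a, gen_ok k a -> bounded_op p (rho a)) /\
  (forall a b, term_ok k a -> term_ok k b -> aeq k a b ->
     opeq p (eval rho a) (eval rho b)).

Definition rep_injective (p : R) (k : kind) (rho : gen -> op) : Prop :=
  forall a b, term_ok k a -> term_ok k b ->
    opeq p (eval rho a) (eval rho b) -> aeq k a b.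

Definition supp_in (f : nat -> C) (A : nset) : Prop :=
  forall x, A x = false -> f x = C0.

Definition rep_free (p : R) (k : kind) (rho : gen -> op) : Prop :=
  exists En : Z -> nset,
    (forall x, exists m, En m x = true) /\
    (forall m m' x, En m x = true -> En m' x = true -> m = m') /\
    (forall j, gen_ok k (gs j) -> forall (m : Z) f, in_lp p f -> supp_in f (En m) ->
       supp_in (rho (gs j) f) (En (m + 1)%Z) /\
       supp_in (rho (gt j) f) (En (m - 1)%Z)).

Definition rep_spatial (p : R) (k : kind) (rho : gen -> op) : Prop :=
  forall j, gen_ok k (gs j) -> spatial_pair p (rho (gs j)) (rho (gt j)).

(** For A = L_d, C_d (d >= 2) or L_infty we let the generators act on l^p by
    graded shifts.  A _branching_ of A is a family of injections
    f_j : N -> N with partial inverses and pairwise disjoint ranges, which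
    cover N when A = L_d and miss a common point otherwise.  Identifying
    N ~ Z x N, the maps sigma_j (m, b) = (m + 1, f_j b) form a branching
    that raises the grade m by one; then s_j xi = xi o sigma_j^{-1} (zero off
    the range) and t_j xi = xi o sigma_j give the representation.
    The construction works for every exponent p. *)

From Stdlib Require Import Reals ZArith Lra Lia List Setoid Morphisms Ring Cantor.
Import ListNotations.
Open Scope R_scope.

Definition Csub (z w : C) : C := Cadd z (Copp w).

Lemma C_ring_theory : ring_theory C0 C1 Cadd Cmul Csub Copp (@eq C).
Proof.
  constructor; intros;
  repeat match goal with z : C |- _ => destruct z end;
  unfold Csub, C0, C1, Cadd, Cmul, Copp; simpl; f_equal; ring.
Qed.
Add Ring C_ring : C_ring_theory.

Lemma Cmod_C1 : Cmod C1 = 1.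
Proof. unfold Cmod, C1; simpl. replace (1 * (1 * 1) + 0 * (0 * 1)) with 1 by ring. apply sqrt_1. Qed.

Lemma Cmod_C0 : Cmod C0 = 0.
Proof. unfold Cmod, C0; simpl. replace (0 * (0 * 1) + 0 * (0 * 1)) with 0 by ring. apply sqrt_0. Qed.

Lemma Cinv_C1 : Cinv C1 = C1.
Proof.
  unfold Cinv, C1; simpl. replace (1 * (1 * 1) + 0 * (0 * 1)) with 1 by ring.
  f_equal; field.
Qed.

Lemma rpow_1 y : rpow 1 y = 1.
Proof.
  unfold rpow. destruct (Rle_dec 1 0); [lra|]. unfold Rpower. rewrite ln_1, Rmult_0_r. apply exp_0.
Qed.

Lemma rpow_0 y : rpow 0 y = 0.
Proof. unfold rpow. destruct (Rle_dec 0 0); [auto|lra]. Qed.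

Lemma rpow_nonneg x y : 0 <= rpow x y.
Proof. unfold rpow. destruct (Rle_dec x 0); [lra|]. unfold Rpower. left. apply exp_pos. Qed.

(** ** Derived identities in the universal algebra *)

Section AlgebraIdentities.
Variable k : kind.
Local Notation "a ≡ b" := (aeq k a b) (at level 70).

#[global] Instance aeq_equiv : Equivalence (aeq k).
Proof. split; [intro; apply aeq_refl | intros ??; apply aeq_sym | intros ???; apply aeq_trans]. Qed.
#[global] Instance tadd_proper : Proper (aeq k ==> aeq k ==> aeq k) tadd.
Proof. intros ?? H ?? H'; now apply aeq_add. Qed.
#[global] Instance tmul_proper : Proper (aeq k ==> aeq k ==> aeq k) tmul.
Proof. intros ?? H ?? H'; now apply aeq_mul. Qed.

Lemma aeq_add0l a : tadd (tscal C0) a ≡ a.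
Proof. rewrite aeq_addC. apply aeq_add0. Qed.

(** 0 is absorbing; the axioms only give it through additive cancellation. *)
Lemma aeq_mul0l a : tmul (tscal C0) a ≡ tscal C0.
Proof.
  set (z := tmul (tscal C0) a).
  assert (Hz : z ≡ tadd z z).
  { unfold z. rewrite <- aeq_mulDl, aeq_scal_add.
    replace (Cadd C0 C0) with C0 by ring. reflexivity. }
  transitivity (tadd z (tadd z (tmul (tscal (Copp C1)) z))).
  { rewrite aeq_addN. symmetry. apply aeq_add0. }
  rewrite aeq_addA, <- Hz. apply aeq_addN.
Qed.

Lemma aeq_mul0r a : tmul a (tscal C0) ≡ tscal C0.
Proof. rewrite <- aeq_scal_comm. apply aeq_mul0l. Qed.

Lemma aeq_scalA c e a : tmul (tscal c) (tmul (tscal e) a) ≡ tmul (tscal (Cmul c e)) a.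
Proof. rewrite aeq_mulA, aeq_scal_mul. reflexivity. Qed.

Lemma aeq_scal_central a c b : tmul a (tmul (tscal c) b) ≡ tmul (tscal c) (tmul a b).
Proof. rewrite aeq_mulA, <- aeq_scal_comm, <- aeq_mulA. reflexivity. Qed.

Lemma aeq_scalDl c e a :
  tadd (tmul (tscal c) a) (tmul (tscal e) a) ≡ tmul (tscal (Cadd c e)) a.
Proof. rewrite <- aeq_mulDl, aeq_scal_add. reflexivity. Qed.

Lemma aeq_of_sub_zero a b : tadd a (tmul (tscal (Copp C1)) b) ≡ tscal C0 -> a ≡ b.
Proof.
  intro H.
  assert (Hb : tadd (tmul (tscal (Copp C1)) b) b ≡ tscal C0).
  { rewrite aeq_addC. apply aeq_addN. }
  rewrite <- (aeq_add0 k a), <- Hb, aeq_addA, H. apply aeq_add0l.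
Qed.
End AlgebraIdentities.

(** ** Normal form: linear combinations of monomials s_mu t_nu^* *)

(** [s_word [j1; ..; jn] = s_j1 ... s_jn] and [t_word [j1; ..; jn] = t_jn ... t_j1],
    which plays the role of the adjoint of [s_word nu]. *)
Fixpoint s_word (mu : list nat) : term :=
  match mu with [] => tscal C1 | j :: m => tmul (tgen (gs j)) (s_word m) end.
Fixpoint t_word (nu : list nat) : term :=
  match nu with [] => tscal C1 | j :: m => tmul (t_word m) (tgen (gt j)) end.
Definition monomial (mu nu : list nat) : term := tmul (s_word mu) (t_word nu).

Definition entry := (C * (list nat * list nat))%type.
Fixpoint lincomb (L : list entry) : term :=
  match L with
  | [] => tscal C0
  | (c, (mu, nu)) :: L' => tadd (tmul (tscal c) (monomial mu nu)) (lincomb L')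
  end.

(** [t_word nu * s_word mu] cancels the common prefix of nu and mu, and is 0
    as soon as two different indices meet. *)
Fixpoint cancel_ts (nu mu : list nat) : option (list nat * list nat) :=
  match nu, mu with
  | [], _ => Some (mu, [])
  | _, [] => Some ([], nu)
  | j :: nu', j' :: mu' => if Nat.eqb j j' then cancel_ts nu' mu' else None
  end.

Definition monomial_mul (q q' : list nat * list nat) : option (list nat * list nat) :=
  match cancel_ts (snd q) (fst q') with
  | Some (a, b) => Some (fst q ++ a, snd q' ++ b)
  | None => None
  end.

Definition entry_mul (e e' : entry) : list entry :=
  match monomial_mul (snd e) (snd e') with
  | Some q => [(Cmul (fst e) (fst e'), q)]
  | None => []
  end.

Definition lincomb_mul (L1 L2 : list entry) : list entry :=
  flat_map (fun e => flat_map (fun e' => entry_mul e e') L2) L1.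

Definition idx_ok (k : kind) (j : nat) : Prop := gen_ok k (gs j).
Definition word_ok (k : kind) (w : list nat) : Prop := Forall (idx_ok k) w.
Definition entry_ok (k : kind) (e : entry) : Prop :=
  word_ok k (fst (snd e)) /\ word_ok k (snd (snd e)).

Section NormalForm.
Variable k : kind.
Local Notation "a ≡ b" := (aeq k a b) (at level 70).

Lemma s_word_app mu a : s_word (mu ++ a) ≡ tmul (s_word mu) (s_word a).
Proof.
  induction mu as [|j mu IH]; simpl.
  - symmetry; apply aeq_mul1l.
  - rewrite IH, aeq_mulA. reflexivity.
Qed.

Lemma t_word_app nu b : t_word (nu ++ b) ≡ tmul (t_word b) (t_word nu).
Proof.
  induction nu as [|j nu IH]; simpl.
  - symmetry; apply aeq_mul1r.
  - rewrite IH, aeq_mulA. reflexivity.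
Qed.

Lemma cancel_ts_spec nu mu : word_ok k nu -> word_ok k mu ->
  match cancel_ts nu mu with
  | Some (a, b) => tmul (t_word nu) (s_word mu) ≡ monomial a b /\ word_ok k a /\ word_ok k b
  | None => tmul (t_word nu) (s_word mu) ≡ tscal C0
  end.
Proof.
  revert mu; induction nu as [|j nu IH]; intros mu Hn Hm.
  - simpl. split; [|split; [exact Hm | constructor]].
    unfold monomial; simpl. rewrite aeq_mul1l, aeq_mul1r. reflexivity.
  - destruct mu as [|j' mu].
    + simpl. split; [|split; [constructor|exact Hn]].
      unfold monomial; simpl. rewrite aeq_mul1l, aeq_mul1r. reflexivity.
    + inversion Hn; subst. inversion Hm; subst.
      simpl. destruct (Nat.eqb_spec j j') as [->|Hne].
      * specialize (IH mu ltac:(assumption) ltac:(assumption)).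
        assert (E : tmul (tmul (t_word nu) (tgen (gt j'))) (tmul (tgen (gs j')) (s_word mu))
                  ≡ tmul (t_word nu) (s_word mu)).
        { rewrite <- aeq_mulA, (aeq_mulA k (tgen (gt j'))).
          rewrite (aeq_rel k _ _ (rel_ts k j' ltac:(assumption))), aeq_mul1l. reflexivity. }
        destruct (cancel_ts nu mu) as [[a b]|].
        -- destruct IH as [IH1 IH2]. split; [|exact IH2]. rewrite E. exact IH1.
        -- rewrite E. exact IH.
      * rewrite <- aeq_mulA, (aeq_mulA k (tgen (gt j))).
        rewrite (aeq_rel k _ _ (rel_tsk k j j' ltac:(assumption) ltac:(assumption) Hne)).
        rewrite aeq_mul0l, aeq_mul0r. reflexivity.
Qed.

Lemma monomial_mul_spec q q' : word_ok k (fst q) -> word_ok k (snd q) ->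
  word_ok k (fst q') -> word_ok k (snd q') ->
  match monomial_mul q q' with
  | Some r => tmul (monomial (fst q) (snd q)) (monomial (fst q') (snd q'))
                ≡ monomial (fst r) (snd r) /\ word_ok k (fst r) /\ word_ok k (snd r)
  | None => tmul (monomial (fst q) (snd q)) (monomial (fst q') (snd q')) ≡ tscal C0
  end.
Proof.
  destruct q as [mu nu], q' as [mu' nu']; simpl; intros H1 H2 H3 H4.
  unfold monomial_mul; simpl.
  pose proof (cancel_ts_spec nu mu' H2 H3) as R.
  assert (E : tmul (monomial mu nu) (monomial mu' nu') ≡
              tmul (s_word mu) (tmul (tmul (t_word nu) (s_word mu')) (t_word nu'))).
  { unfold monomial. rewrite !aeq_mulA. reflexivity. }
  destruct (cancel_ts nu mu') as [[a b]|].
  - destruct R as [R [Ra Rb]]. simpl. split.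
    + rewrite E, R. unfold monomial. rewrite s_word_app, t_word_app, !aeq_mulA. reflexivity.
    + split; apply Forall_app; auto.
  - rewrite E, R, aeq_mul0l, aeq_mul0r. reflexivity.
Qed.

Lemma lincomb_app L1 L2 : lincomb (L1 ++ L2) ≡ tadd (lincomb L1) (lincomb L2).
Proof.
  induction L1 as [|[c [mu nu]] L1 IH]; simpl.
  - symmetry; apply aeq_add0l.
  - rewrite IH, aeq_addA. reflexivity.
Qed.

Lemma lincomb_single c mu nu : lincomb [(c, (mu, nu))] ≡ tmul (tscal c) (monomial mu nu).
Proof. simpl. apply aeq_add0. Qed.

Lemma lincomb_cons e L : lincomb (e :: L) ≡ tadd (lincomb [e]) (lincomb L).
Proof. destruct e as [c [mu nu]]. simpl. rewrite aeq_add0. reflexivity. Qed.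

Lemma entry_mul_spec e e' : entry_ok k e -> entry_ok k e' ->
  tmul (lincomb [e]) (lincomb [e']) ≡ lincomb (entry_mul e e') /\
  Forall (entry_ok k) (entry_mul e e').
Proof.
  destruct e as [c [mu nu]], e' as [c' [mu' nu']]; intros [H1 H2] [H3 H4]; simpl in *.
  pose proof (monomial_mul_spec (mu, nu) (mu', nu') H1 H2 H3 H4) as M; simpl in M.
  unfold entry_mul; simpl.
  assert (E : tmul (lincomb [(c, (mu, nu))]) (lincomb [(c', (mu', nu'))])
            ≡ tmul (tscal (Cmul c c')) (tmul (monomial mu nu) (monomial mu' nu'))).
  { rewrite !lincomb_single, <- aeq_mulA, aeq_scal_central, aeq_scalA. reflexivity. }
  destruct (monomial_mul (mu, nu) (mu', nu')) as [[a b]|].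
  - destruct M as [M [Ma Mb]]. simpl in *. split.
    + rewrite E, M. symmetry. apply lincomb_single.
    + repeat constructor; assumption.
  - split; [|constructor]. rewrite E, M, aeq_mul0r. reflexivity.
Qed.

Lemma lincomb_mul_spec L1 L2 : Forall (entry_ok k) L1 -> Forall (entry_ok k) L2 ->
  tmul (lincomb L1) (lincomb L2) ≡ lincomb (lincomb_mul L1 L2) /\
  Forall (entry_ok k) (lincomb_mul L1 L2).
Proof.
  intros H1 H2. induction H1 as [|e L1 He H1 IH]; simpl.
  - split; [apply aeq_mul0l | constructor].
  - assert (Row : tmul (lincomb [e]) (lincomb L2)
                    ≡ lincomb (flat_map (fun e' => entry_mul e e') L2)
                  /\ Forall (entry_ok k) (flat_map (fun e' => entry_mul e e') L2)).
    { clear IH H1. induction H2 as [|e' L2 He' H2 IH2]; simpl.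
      - split; [apply aeq_mul0r | constructor].
      - destruct (entry_mul_spec e e' He He') as [A B]. destruct IH2 as [A' B'].
        split.
        + rewrite lincomb_app, <- A, <- A', (lincomb_cons e' L2), aeq_mulDr. reflexivity.
        + apply Forall_app; auto. }
    destruct Row as [A B]. destruct IH as [A' B']. split.
    + rewrite lincomb_app, <- A, <- A', (lincomb_cons e L1), aeq_mulDl. reflexivity.
    + apply Forall_app; auto.
Qed.

Lemma normal_form_exists t : term_ok k t ->
  exists L, Forall (entry_ok k) L /\ t ≡ lincomb L.
Proof.
  induction t as [a|c|a IHa b IHb|a IHa b IHb]; simpl; intro Ht.
  - destruct a as [j|j].
    + exists [(C1, ([j], []))]. split.
      * repeat constructor. exact Ht.
      * rewrite lincomb_single. unfold monomial; simpl. rewrite aeq_mul1l, !aeq_mul1r. reflexivity.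
    + exists [(C1, ([], [j]))]. split.
      * repeat constructor. exact Ht.
      * rewrite lincomb_single. unfold monomial; simpl. rewrite !aeq_mul1l. reflexivity.
  - exists [(c, ([], []))]. split.
    + repeat constructor.
    + rewrite lincomb_single. unfold monomial; simpl. rewrite aeq_mul1l, aeq_scal_mul.
      replace (Cmul c C1) with c by ring. reflexivity.
  - destruct Ht as [Ha Hb]. destruct (IHa Ha) as [L1 [O1 E1]], (IHb Hb) as [L2 [O2 E2]].
    exists (L1 ++ L2). split; [apply Forall_app; auto|]. rewrite lincomb_app, E1, E2. reflexivity.
  - destruct Ht as [Ha Hb]. destruct (IHa Ha) as [L1 [O1 E1]], (IHb Hb) as [L2 [O2 E2]].
    destruct (lincomb_mul_spec L1 L2 O1 O2) as [A B]. exists (lincomb_mul L1 L2). split; auto.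
    rewrite E1, E2. exact A.
Qed.
End NormalForm.

(** ** Padding in L_d: all monomials with t-words of one common length *)

(** [pad1 d e] replaces c s_mu t_nu^* by sum_{j<d} c s_{mu j} t_{nu j}^*,
    i.e. inserts sum_j s_j t_j = 1 in the middle; [padk] iterates it. *)
Definition pad1 (d : nat) (e : entry) : list entry :=
  map (fun j => (fst e, (fst (snd e) ++ [j], snd (snd e) ++ [j]))) (seq 0 d).
Fixpoint padk (d n : nat) (e : entry) : list entry :=
  match n with 0 => [e] | S n' => flat_map (padk d n') (pad1 d e) end.
Definition t_len (e : entry) : nat := length (snd (snd e)).
Fixpoint max_t_len (L : list entry) : nat :=
  match L with [] => 0 | e :: L' => Nat.max (t_len e) (max_t_len L') end.
Definition pad_lincomb (d : nat) (L : list entry) : list entry :=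
  flat_map (fun e => padk d (max_t_len L - t_len e) e) L.

Section Padding.
Variable d : nat.
Local Notation "a ≡ b" := (aeq (KL d) a b) (at level 70).

Lemma lincomb_pad1_gen c mu nu m :
  lincomb (map (fun j => (c, (mu ++ [j], nu ++ [j]))) (seq 0 m))
  ≡ tmul (tscal c) (tmul (s_word mu) (tmul (sum_st m) (t_word nu))).
Proof.
  induction m as [|m IH].
  - simpl. rewrite aeq_mul0l, !aeq_mul0r. reflexivity.
  - rewrite seq_S, map_app, lincomb_app, IH. simpl sum_st. simpl map.
    rewrite lincomb_single. unfold monomial.
    rewrite s_word_app, t_word_app. simpl.
    rewrite aeq_mul1r, aeq_mul1l.
    rewrite (aeq_mulDl _ (sum_st m)), aeq_mulDr, aeq_mulDr, !aeq_mulA. reflexivity.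
Qed.

Lemma pad1_spec e : lincomb (pad1 d e) ≡ lincomb [e].
Proof.
  destruct e as [c [mu nu]]. unfold pad1; simpl fst; simpl snd.
  rewrite lincomb_pad1_gen, (aeq_rel _ _ _ (rel_sum (KL d) d eq_refl)), aeq_mul1l.
  symmetry. apply lincomb_single.
Qed.

Lemma lincomb_flat_map F L : (forall e, lincomb (F e) ≡ lincomb [e]) ->
  lincomb (flat_map F L) ≡ lincomb L.
Proof.
  intro H. induction L as [|e L IH]; simpl.
  - reflexivity.
  - rewrite lincomb_app, H, IH. symmetry. apply lincomb_cons.
Qed.

Lemma padk_spec n e : lincomb (padk d n e) ≡ lincomb [e].
Proof.
  revert e; induction n as [|n IH]; intro e; simpl.
  - reflexivity.
  - rewrite (lincomb_flat_map _ _ IH). apply pad1_spec.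
Qed.

Lemma padk_t_len n e : entry_ok (KL d) e ->
  Forall (fun e' => entry_ok (KL d) e' /\ t_len e' = (t_len e + n)%nat) (padk d n e).
Proof.
  revert e; induction n as [|n IH]; intros e He; simpl.
  - constructor; [split; [auto|lia]|constructor].
  - apply Forall_flat_map. unfold pad1. apply Forall_map. apply Forall_forall.
    intros j Hj. apply in_seq in Hj.
    assert (Ho : entry_ok (KL d) (fst e, (fst (snd e) ++ [j], snd (snd e) ++ [j]))).
    { destruct He as [H1 H2]. split; simpl; apply Forall_app; split; auto;
      repeat constructor; unfold idx_ok; simpl; lia. }
    eapply Forall_impl; [|exact (IH _ Ho)].
    intros e' [A B]. split; auto. rewrite B. unfold t_len; simpl. rewrite length_app; simpl. lia.
Qed.

Lemma max_t_len_ge L e : In e L -> (t_len e <= max_t_len L)%nat.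
Proof.
  induction L as [|e' L IH]; simpl; [tauto|].
  intros [->|H]; [lia|]. specialize (IH H). lia.
Qed.

Lemma pad_lincomb_spec L : Forall (entry_ok (KL d)) L ->
  lincomb (pad_lincomb d L) ≡ lincomb L /\
  Forall (fun e' => entry_ok (KL d) e' /\ t_len e' = max_t_len L) (pad_lincomb d L).
Proof.
  intro H. split.
  - apply lincomb_flat_map. intro; apply padk_spec.
  - apply Forall_flat_map. apply Forall_forall. intros e He.
    pose proof (max_t_len_ge L e He).
    eapply Forall_impl; [|apply padk_t_len; rewrite Forall_forall in H; auto].
    intros e' [A B]. split; auto. lia.
Qed.
End Padding.

Lemma uniform_normal_form k t : term_ok k t ->
  exists L, Forall (entry_ok k) L /\ aeq k t (lincomb L) /\
  (forall d, k = KL d -> forall e e', In e L -> In e' L -> t_len e = t_len e').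
Proof.
  intro Ht. destruct (normal_form_exists k t Ht) as [L [Hok HL]].
  destruct k as [d|d|].
  - destruct (pad_lincomb_spec d L Hok) as [A B].
    exists (pad_lincomb d L). split; [|split].
    + eapply Forall_impl; [|exact B]. simpl; tauto.
    + rewrite HL. symmetry. exact A.
    + intros d' _ e e' He He'. rewrite Forall_forall in B.
      destruct (B e He) as [_ ->]. destruct (B e' He') as [_ ->]. reflexivity.
  - exists L. repeat split; auto. discriminate.
  - exists L. repeat split; auto. discriminate.
Qed.

(** ** Sums of nonnegative terms under injective reindexing *)

Lemma psum_ext (f g : nat -> R) (A B : nset) (n : nat) :
  (forall x, (x < n)%nat -> (if A x then f x else 0) = (if B x then g x else 0)) ->
  psum f A n = psum g B n.
Proof.
  induction n as [|n IH]; simpl; intro H; auto.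
  rewrite IH by (intros; apply H; lia). rewrite H by lia. reflexivity.
Qed.

Lemma psum_nonneg (a : nat -> R) (B : nset) N : (forall x, 0 <= a x) -> 0 <= psum a B N.
Proof. intro Ha. induction N; simpl; [lra|]. destruct (B N); [specialize (Ha N)|]; lra. Qed.

Lemma psum_remove (a : nat -> R) (B : nset) (c N : nat) : (c < N)%nat -> B c = true ->
  psum a B N = psum a (fun x => andb (B x) (negb (Nat.eqb x c))) N + a c.
Proof.
  induction N as [|N IH]; intros Hc HB; [lia|]. simpl.
  destruct (Nat.eq_dec c N) as [->|Hne].
  - rewrite HB, Nat.eqb_refl. simpl.
    rewrite (psum_ext a a _ (fun x => andb (B x) (negb (Nat.eqb x N)))); [ring|].
    intros x Hx. destruct (Nat.eqb_spec x N); [lia|]. rewrite Bool.andb_true_r. reflexivity.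
  - rewrite IH; [|lia|auto]. destruct (Nat.eqb_spec N c); [lia|]. simpl.
    rewrite Bool.andb_true_r. ring.
Qed.

Lemma psum_reindex_le (a : nat -> R) (D : nset) (g : nat -> nat) :
  (forall x, 0 <= a x) ->
  (forall x y, D x = true -> D y = true -> g x = g y -> x = y) ->
  forall n B N, (forall x, (x < n)%nat -> D x = true -> B (g x) = true /\ (g x < N)%nat) ->
  psum (fun x => a (g x)) D n <= psum a B N.
Proof.
  intros Ha Hinj. induction n as [|n IH]; intros B N H; simpl; [apply psum_nonneg, Ha|].
  destruct (D n) eqn:Dn.
  - destruct (H n ltac:(lia) Dn) as [Hb Hn].
    rewrite (psum_remove a B (g n) N Hn Hb).
    apply Rplus_le_compat_r. apply IH.
    intros x Hx Dx. destruct (H x ltac:(lia) Dx) as [Hb' Hn']. split; auto.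
    rewrite Hb'. simpl. destruct (Nat.eqb_spec (g x) (g n)) as [E|]; auto.
    apply Hinj in E; auto. lia.
  - rewrite Rplus_0_r. apply IH. intros x Hx Dx. apply H; auto.
Qed.

Lemma bounded_on_prefix (g : nat -> nat) n : exists N, forall x, (x < n)%nat -> (g x < N)%nat.
Proof.
  induction n as [|n [N IH]]; [exists 0%nat; lia|].
  exists (S (Nat.max N (g n))). intros x Hx. destruct (Nat.eq_dec x n) as [->|]; [lia|].
  specialize (IH x ltac:(lia)). lia.
Qed.

Lemma psum_reindex (a : nat -> R) (D B : nset) (g : nat -> nat) :
  (forall x, 0 <= a x) ->
  (forall x y, D x = true -> D y = true -> g x = g y -> x = y) ->
  (forall x, D x = true -> B (g x) = true) ->
  forall n, exists N, psum (fun x => a (g x)) D n <= psum a B N.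
Proof.
  intros Ha Hinj HB n. destruct (bounded_on_prefix g n) as [N HN]. exists N.
  apply psum_reindex_le; auto.
Qed.

Lemma cv_of_mutual_domination u v : Un_growing u -> Un_growing v ->
  (forall n, exists N, u n <= v N) -> (forall n, exists N, v n <= u N) ->
  forall l, Un_cv u l -> Un_cv v l.
Proof.
  intros Gu Gv H1 H2 l Hu eps Heps.
  destruct (Hu eps Heps) as [N0 HN0].
  specialize (HN0 N0 (le_n _)). unfold R_dist in HN0. apply Rabs_def2 in HN0.
  destruct (H1 N0) as [N1 HN1].
  exists N1. intros n Hn. unfold R_dist.
  pose proof (tech9 v Gv N1 n Hn).
  destruct (H2 n) as [M HM]. pose proof (growing_ineq u l Gu Hu M).
  apply Rabs_def1; lra.
Qed.

Lemma counting_ext_sum_eq (A B : nset) (g h : nat -> nat) :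
  (forall x y, A x = true -> A y = true -> g x = g y -> x = y) ->
  (forall x, A x = true -> B (g x) = true) ->
  (forall x y, B x = true -> B y = true -> h x = h y -> x = y) ->
  (forall y, B y = true -> A (h y) = true) ->
  ext_sum_eq (fun _ => 1) A (fun _ => 1) B.
Proof.
  intros Hg HgB Hh HhA l.
  assert (G : forall D, Un_growing (psum (fun _ => 1) D)).
  { intros D n. simpl. destruct (D n); lra. }
  assert (One : forall x : nat, 0 <= 1) by (intro; lra).
  split; apply cv_of_mutual_domination; auto; intro n.
  - apply (psum_reindex (fun _ => 1) A B g); auto.
  - apply (psum_reindex (fun _ => 1) B A h); auto.
  - apply (psum_reindex (fun _ => 1) B A h); auto.
  - apply (psum_reindex (fun _ => 1) A B g); auto.
Qed.

(** ** Representations by graded shifts *)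

Record branching (k : kind) (f : nat -> nat -> nat) (finv : nat -> nat -> option nat)
  : Prop := {
  br_left_inv : forall j b, finv j (f j b) = Some b;
  br_right_inv : forall j b b', finv j b' = Some b -> f j b = b';
  br_disjoint : forall j j' b b', idx_ok k j -> idx_ok k j' -> f j b = f j' b' -> j = j';
  br_cover : forall d, k = KL d -> forall b', exists j b, (j < d)%nat /\ f j b = b';
  br_miss : (forall d, k <> KL d) -> exists b0, forall j b, idx_ok k j -> f j b <> b0
}.

Definition shift_rep (sg : nat -> nat -> nat) (pre : nat -> nat -> option nat)
  (a : gen) : op :=
  match a with
  | gs j => fun f x => match pre j x with Some w => f w | None => C0 end
  | gt j => fun f x => f (sg j x)
  end.

Section GradedShift.
Variable k : kind.
Variables (sg : nat -> nat -> nat) (pre : nat -> nat -> option nat) (grade : nat -> Z).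
Hypothesis Hbr : branching k sg pre.
Hypothesis grade_sg : forall j x, grade (sg j x) = (grade x + 1)%Z.
Variable p : R.

Local Notation rho := (shift_rep sg pre).

Lemma pre_sg j x : pre j (sg j x) = Some x.
Proof. apply (br_left_inv _ _ _ Hbr). Qed.

Lemma sg_pre j x y : pre j y = Some x -> sg j x = y.
Proof. apply (br_right_inv _ _ _ Hbr). Qed.

Lemma sg_inj j x y : sg j x = sg j y -> x = y.
Proof. intro H. pose proof (pre_sg j x) as P. rewrite H, pre_sg in P. congruence. Qed.

Lemma eval_ext t : forall f g, (forall y, f y = g y) -> forall x, eval rho t f x = eval rho t g x.
Proof.
  induction t as [[j|j]|c|a IHa b IHb|a IHa b IHb]; intros f g H x; simpl.
  - destruct (pre j x); auto.
  - auto.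
  - rewrite H; auto.
  - rewrite (IHa f g H), (IHb f g H); auto.
  - apply IHa. apply IHb. exact H.
Qed.

Lemma eval_add t : forall f g x,
  eval rho t (fun y => Cadd (f y) (g y)) x = Cadd (eval rho t f x) (eval rho t g x).
Proof.
  induction t as [[j|j]|c|a IHa b IHb|a IHa b IHb]; intros f g x; simpl.
  - destruct (pre j x); auto. unfold C0, Cadd; simpl; f_equal; ring.
  - auto.
  - ring.
  - rewrite IHa, IHb. ring.
  - rewrite <- IHa. apply eval_ext. intro y. apply IHb.
Qed.

Lemma eval_scal t : forall c f x,
  eval rho t (fun y => Cmul c (f y)) x = Cmul c (eval rho t f x).
Proof.
  induction t as [[j|j]|c'|a IHa b IHb|a IHa b IHb]; intros c f x; simpl.
  - destruct (pre j x); auto. unfold C0, Cmul; simpl; f_equal; ring.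
  - auto.
  - ring.
  - rewrite IHa, IHb. ring.
  - rewrite <- IHa. apply eval_ext. intro y. apply IHb.
Qed.

Definition in_range (j y : nat) : bool :=
  match pre j y with Some _ => true | None => false end.
Definition preimage0 (j y : nat) : nat := match pre j y with Some x => x | None => 0%nat end.

Lemma in_range_sg j x : in_range j (sg j x) = true.
Proof. unfold in_range. rewrite pre_sg. reflexivity. Qed.

Lemma preimage0_inj j x y : in_range j x = true -> in_range j y = true ->
  preimage0 j x = preimage0 j y -> x = y.
Proof.
  unfold in_range, preimage0.
  destruct (pre j x) eqn:Ex, (pre j y) eqn:Ey; try discriminate. intros _ _ ->.
  apply sg_pre in Ex. apply sg_pre in Ey. congruence.
Qed.

(** Each generator permutes or restricts coordinates, hence does not
    increase the partial l^p sums. *)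
Lemma gen_norm_le a f M : (forall n, pnorm_partial p f n <= M) ->
  forall n, pnorm_partial p (rho a f) n <= M.
Proof.
  intros Hf n. unfold pnorm_partial.
  set (A := fun w => rpow (Cmod (f w)) p).
  assert (HA : forall x, 0 <= A x) by (intro; apply rpow_nonneg).
  destruct a as [j|j]; simpl.
  - rewrite (psum_ext _ (fun x => A (preimage0 j x)) _ (in_range j) n).
    + destruct (psum_reindex A (in_range j) (fun _ => true) (preimage0 j) HA
          (preimage0_inj j) (fun _ _ => eq_refl) n) as [N HN].
      eapply Rle_trans; [exact HN|]. apply Hf.
    + intros x _. unfold A, in_range, preimage0. destruct (pre j x); auto.
      rewrite Cmod_C0. apply rpow_0.
  - destruct (psum_reindex A (fun _ => true) (fun _ => true) (sg j) HA
        (fun x y _ _ => sg_inj j x y) (fun _ _ => eq_refl) n) as [N HN].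
    eapply Rle_trans; [exact HN|]. apply Hf.
Qed.

Lemma gen_bounded a : bounded_op p (rho a).
Proof.
  split; [|split; [|split]].
  - intros f [M HM]. exists M. apply gen_norm_le. auto.
  - intros f g _ _ x. destruct a; simpl; auto. destruct (pre j x); auto.
    unfold C0, Cadd; simpl; f_equal; ring.
  - intros c f _ x. destruct a; simpl; auto. destruct (pre j x); auto.
    unfold C0, Cmul; simpl; f_equal; ring.
  - exists 1. split; [lra|]. intros f M HM n. rewrite Rmult_1_l. apply gen_norm_le. auto.
Qed.

Lemma shift_free : rep_free p k rho.
Proof.
  exists (fun m x => Z.eqb (grade x) m). split; [|split].
  - intro x. exists (grade x). apply Z.eqb_refl.
  - intros m m' x H1 H2. apply Z.eqb_eq in H1, H2. congruence.
  - intros j _ m f _ Hs. split.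
    + intros x Hx. simpl. destruct (pre j x) eqn:E; auto.
      apply Hs. apply sg_pre in E. subst x. rewrite grade_sg in Hx.
      apply Z.eqb_neq in Hx. apply Z.eqb_neq. lia.
    + intros x Hx. simpl. apply Hs. rewrite grade_sg.
      apply Z.eqb_neq in Hx. apply Z.eqb_neq. lia.
Qed.

(** s_j has system (N, range sg j, A |-> sg j (A), 1) and t_j the reverse one;
    both set maps preserve counting measure, so the Radon-Nikodym derivatives are 1. *)

Definition full_set : nset := fun _ => true.
Definition shift_set (j : nat) (A : nset) : nset :=
  fun y => match pre j y with Some x => A x | None => false end.
Definition unshift_set (j : nat) (B : nset) : nset := fun x => B (sg j x).

Lemma outside_range j B y : subset B (in_range j) -> pre j y = None -> B y = false.
Proof.
  intros HB Hy. destruct (B y) eqn:E; auto. apply HB in E. unfold in_range in E.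
  rewrite Hy in E. discriminate.
Qed.

Lemma shift_unshift_set j B : subset B (in_range j) -> seteq (shift_set j (unshift_set j B)) B.
Proof.
  intros HB y. unfold shift_set, unshift_set. destruct (pre j y) eqn:Ey.
  - apply sg_pre in Ey. congruence.
  - symmetry. exact (outside_range j B y HB Ey).
Qed.

Lemma unshift_shift_set j A : seteq (unshift_set j (shift_set j A)) A.
Proof. intro x. unfold unshift_set, shift_set. rewrite pre_sg. reflexivity. Qed.

Lemma shift_set_bij j : is_bij_mst full_set (in_range j) (shift_set j).
Proof.
  split; [split; [|split; [|split; [|split; [|split]]]]|split].
  - intros A B _ H y. unfold shift_set. destruct (pre j y); auto.
  - intros A _ y. unfold shift_set, in_range. destruct (pre j y); auto.
  - intro y. unfold shift_set, in_range, full_set. destruct (pre j y); auto.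
  - intros A _ y. unfold shift_set, in_range, full_set. destruct (pre j y); auto.
  - intros A B _ _ y. unfold shift_set. destruct (pre j y); auto.
  - intros An U _ HU y. unfold shift_set. destruct (pre j y).
    + apply HU.
    + split; [discriminate|intros [n Hn]; discriminate].
  - intros A B _ _ H x. rewrite <- (unshift_shift_set j A), <- (unshift_shift_set j B).
    apply H.
  - intros B HB. exists (unshift_set j B). split; [intros ??; reflexivity|].
    apply shift_unshift_set. exact HB.
Qed.

Lemma unshift_set_bij j : is_bij_mst (in_range j) full_set (unshift_set j).
Proof.
  split; [split; [|split; [|split; [|split; [|split]]]]|split].
  - intros A B _ H x. apply H.
  - intros A _ x _. reflexivity.
  - intro x. apply in_range_sg.
  - intros A _ x. unfold unshift_set. rewrite in_range_sg. reflexivity.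
  - intros A B _ _ x. reflexivity.
  - intros An U _ HU x. apply HU.
  - intros A B HA HB H y.
    rewrite <- (shift_unshift_set j A HA), <- (shift_unshift_set j B HB).
    unfold shift_set. destruct (pre j y); auto.
  - intros B _. exists (shift_set j B). split.
    + intros y. unfold shift_set, in_range. destruct (pre j y); auto.
    + apply unshift_shift_set.
Qed.

Lemma shift_push j : is_push full_set (in_range j) (shift_set j) (rho (gs j)).
Proof.
  split; [|split; [|split; [|split]]]; simpl.
  - intros f g H y _. destruct (pre j y); auto.
  - intros A _ y _. unfold indic, shift_set. destruct (pre j y); auto.
  - intros f g y Hy. unfold in_range in Hy. destruct (pre j y); auto; discriminate.
  - intros c f y Hy. unfold in_range in Hy. destruct (pre j y); auto; discriminate.
  - intros fn f H y Hy. unfold in_range in Hy. destruct (pre j y); [apply H; auto|discriminate].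
Qed.

Lemma unshift_push j : is_push (in_range j) full_set (unshift_set j) (rho (gt j)).
Proof.
  split; [|split; [|split; [|split]]]; simpl.
  - intros f g H y _. apply H. apply in_range_sg.
  - intros A _ y _. reflexivity.
  - reflexivity.
  - reflexivity.
  - intros fn f H y _. apply H. apply in_range_sg.
Qed.

Lemma shift_RN j : is_RN full_set (in_range j) (shift_set j) (fun _ => 1).
Proof.
  split; [intros; lra|]. intros A _.
  apply (counting_ext_sum_eq A (shift_set j A) (sg j) (preimage0 j)).
  - intros x y _ _. apply sg_inj.
  - intros x Hx. unfold shift_set. rewrite pre_sg. exact Hx.
  - intros x y Hx Hy. apply preimage0_inj; unfold in_range; unfold shift_set in Hx, Hy;
      [destruct (pre j x)|destruct (pre j y)]; auto.
  - intros y Hy. unfold shift_set in Hy. unfold preimage0. destruct (pre j y); auto; discriminate.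
Qed.

Lemma unshift_RN j : is_RN (in_range j) full_set (unshift_set j) (fun _ => 1).
Proof.
  split; [intros; lra|]. intros B HB.
  apply (counting_ext_sum_eq B (unshift_set j B) (preimage0 j) (sg j)).
  - intros x y Hx Hy. apply preimage0_inj; apply HB; auto.
  - intros y Hy. unfold unshift_set, preimage0. destruct (pre j y) eqn:Ey.
    + apply sg_pre in Ey. congruence.
    + rewrite (outside_range j B y HB Ey) in Hy. discriminate.
  - intros x y _ _. apply sg_inj.
  - intros x Hx. exact Hx.
Qed.

Lemma shift_spatial j : spatial_pair p (rho (gs j)) (rho (gt j)).
Proof.
  exists full_set, (in_range j), (shift_set j), (unshift_set j), (fun _ => C1),
    (rho (gs j)), (rho (gt j)), (fun _ => 1), (fun _ => 1).
  split; [apply shift_set_bij|]. split; [apply unshift_set_bij|].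
  split; [split; [intros A _; apply unshift_shift_set | apply shift_unshift_set]|].
  split; [apply shift_push|]. split; [apply unshift_push|].
  split; [apply shift_RN|]. split; [apply unshift_RN|].
  split; [intros y _; apply Cmod_C1|]. split.
  - intros f _ x. unfold spi, in_range. simpl. destruct (pre j x); auto.
    rewrite rpow_1. unfold RtoC, restrict, full_set, C1, Cmul; simpl.
    destruct (f n) as [u v]; simpl; f_equal; ring.
  - intros f _ x. unfold spi, full_set. simpl. rewrite Cinv_C1, rpow_1.
    unfold restrict. rewrite in_range_sg. unfold RtoC, C1, Cmul; simpl.
    destruct (f (sg j x)) as [u v]; simpl; f_equal; ring.
Qed.

Definition in_ranges (m x : nat) : bool := existsb (fun j => in_range j x) (seq 0 m).

Lemma eval_sum_st d m : k = KL d -> (m <= d)%nat -> forall f x,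
  eval rho (sum_st m) f x = if in_ranges m x then f x else C0.
Proof.
  intros Hk. induction m as [|m IH]; intros Hm f x; simpl.
  - unfold in_ranges; simpl. ring.
  - rewrite IH by lia. unfold in_ranges. rewrite seq_S, existsb_app. simpl.
    fold (in_ranges m x). unfold in_range at 1.
    destruct (pre m x) as [w|] eqn:E.
    + rewrite (sg_pre _ _ _ E).
      destruct (in_ranges m x) eqn:E2; [|simpl; ring].
      exfalso. apply existsb_exists in E2.
      destruct E2 as [j [Hj Hp]]. apply in_seq in Hj. unfold in_range in Hp.
      destruct (pre j x) as [w'|] eqn:E3; [|discriminate].
      apply sg_pre in E3. apply sg_pre in E.
      assert (j = m) by (apply (br_disjoint _ _ _ Hbr j m w' w);
                         [unfold idx_ok; rewrite Hk; simpl; lia..|congruence]).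
      lia.
    + rewrite Bool.orb_false_r. destruct (in_ranges m x); ring.
Qed.

Lemma rel_sound a b : rel k a b -> forall f x, eval rho a f x = eval rho b f x.
Proof.
  intros H f x. destruct H as [j Hj|j l Hj Hl Hne|d Hk]; simpl.
  - rewrite pre_sg. ring.
  - destruct (pre l (sg j x)) as [w|] eqn:E; [|ring].
    exfalso. apply sg_pre in E. apply Hne. symmetry. eapply (br_disjoint _ _ _ Hbr); eauto.
  - rewrite (eval_sum_st d d Hk (le_n _)).
    destruct (in_ranges d x) eqn:E; [ring|].
    exfalso. destruct (br_cover _ _ _ Hbr d Hk x) as [j [w [Hj Hw]]].
    assert (in_ranges d x = true).
    { apply existsb_exists. exists j. split; [apply in_seq; lia|].
      rewrite <- Hw. apply in_range_sg. }
    congruence.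
Qed.

Lemma aeq_sound a b : aeq k a b -> forall f x, eval rho a f x = eval rho b f x.
Proof.
  induction 1; intros f x; simpl.
  - apply rel_sound. assumption.
  - reflexivity.
  - auto.
  - congruence.
  - rewrite IHaeq1, IHaeq2. reflexivity.
  - transitivity (eval rho a' (eval rho b f) x).
    + apply IHaeq1.
    + apply eval_ext. apply IHaeq2.
  - ring.
  - ring.
  - ring.
  - unfold C0, C1, Cadd, Cmul, Copp; simpl; f_equal; ring.
  - reflexivity.
  - ring.
  - transitivity (eval rho a f x); [|ring]. apply eval_ext. intro; ring.
  - reflexivity.
  - apply eval_add.
  - ring.
  - ring.
  - symmetry. apply eval_scal.
Qed.

Lemma shift_is_rep : is_rep p k rho.
Proof.
  split.
  - intros a _. apply gen_bounded.
  - intros a b _ _ H f _ x. apply aeq_sound. exact H.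
Qed.

Fixpoint shift_word (w : list nat) (x : nat) : nat :=
  match w with [] => x | j :: w' => sg j (shift_word w' x) end.
Fixpoint unshift_word (w : list nat) (x : nat) : option nat :=
  match w with
  | [] => Some x
  | j :: w' => match pre j x with Some y => unshift_word w' y | None => None end
  end.

Lemma unshift_shift_word w x : unshift_word w (shift_word w x) = Some x.
Proof. induction w as [|j w IH]; simpl; auto. rewrite pre_sg. auto. Qed.

Lemma shift_unshift_word w : forall x y, unshift_word w y = Some x -> shift_word w x = y.
Proof.
  induction w as [|j w IH]; simpl; intros x y H.
  - congruence.
  - destruct (pre j y) as [z|] eqn:E; [|discriminate].
    rewrite (IH _ _ H). apply sg_pre. auto.
Qed.

Lemma grade_shift_word w x : grade (shift_word w x) = (grade x + Z.of_nat (length w))%Z.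
Proof. induction w as [|j w IH]; simpl; [lia|]. rewrite grade_sg, IH. lia. Qed.

Lemma eval_monomial mu nu f x : eval rho (monomial mu nu) f x =
  match unshift_word mu x with Some w => f (shift_word nu w) | None => C0 end.
Proof.
  assert (Es : forall mu f x, eval rho (s_word mu) f x =
    match unshift_word mu x with Some w => Cmul C1 (f w) | None => C0 end).
  { induction mu0 as [|j mu0 IH]; intros g y; simpl; auto. destruct (pre j y); auto. }
  assert (Et : forall nu f x, eval rho (t_word nu) f x = Cmul C1 (f (shift_word nu x))).
  { induction nu0 as [|j nu0 IH]; intros g y; simpl; auto. }
  unfold monomial. simpl. rewrite Es. destruct (unshift_word mu x); auto.
  rewrite Et. ring.
Qed.

(** Disjointness of ranges: equal images along two words force one word to
    be a prefix of the other. *)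
Lemma shift_word_prefix a : forall b u v, word_ok k a -> word_ok k b ->
  (length a <= length b)%nat -> shift_word a u = shift_word b v ->
  exists r, b = a ++ r /\ u = shift_word r v.
Proof.
  induction a as [|i a IH]; intros b u v Ha Hb Hl E.
  - exists b. simpl in *. auto.
  - destruct b as [|i' b]; simpl in Hl; [lia|].
    inversion Ha; subst. inversion Hb; subst. simpl in E.
    assert (i = i') by (eapply (br_disjoint _ _ _ Hbr); eauto). subst i'.
    apply sg_inj in E.
    destruct (IH b u v) as [r [Hr Hu]]; auto; try lia.
    exists r. simpl. rewrite Hr. auto.
Qed.

Definition word_pair_eq_dec : forall q q' : list nat * list nat, {q = q'} + {q <> q'}.
Proof. decide equality; apply list_eq_dec, Nat.eq_dec. Qed.

Definition delta (a : nat) : nat -> C := fun x => if Nat.eqb x a then C1 else C0.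

Lemma delta_lp a : in_lp p (delta a).
Proof.
  exists 1. intro n. unfold pnorm_partial.
  assert (H : forall n, psum (fun x => rpow (Cmod (delta a x)) p) (fun _ => true) n
                        = if Nat.ltb a n then 1 else 0).
  { induction n0 as [|n0 IH]; simpl; auto.
    rewrite IH. unfold delta. destruct (Nat.eqb_spec n0 a).
    - subst. rewrite Cmod_C1, rpow_1. destruct (Nat.ltb_spec a a); [lia|].
      destruct (Nat.ltb_spec a (S a)); [lra|lia].
    - rewrite Cmod_C0, rpow_0.
      destruct (Nat.ltb_spec a n0), (Nat.ltb_spec a (S n0)); try lra; lia. }
  rewrite H. destruct (Nat.ltb a n); lra.
Qed.

(** Probing with delta (nu y) at the point mu y detects exactly the monomial
    s_mu t_nu^* among those whose t-word is not shorter than nu, provided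
    either their t-words have the length of nu or y is outside every range. *)
Lemma eval_monomial_probe y mu nu mu' nu' :
  word_ok k mu -> word_ok k nu -> word_ok k mu' -> word_ok k nu' ->
  (length nu <= length nu')%nat ->
  (length nu' = length nu \/ forall j x, idx_ok k j -> sg j x <> y) ->
  eval rho (monomial mu' nu') (delta (shift_word nu y)) (shift_word mu y) =
  if word_pair_eq_dec (mu', nu') (mu, nu) then C1 else C0.
Proof.
  intros H1 H2 H3 H4 Hl Hy. rewrite eval_monomial.
  destruct (word_pair_eq_dec (mu', nu') (mu, nu)) as [Ep|Ep].
  { inversion Ep; subst. rewrite unshift_shift_word. unfold delta. rewrite Nat.eqb_refl. auto. }
  destruct (unshift_word mu' (shift_word mu y)) as [w|] eqn:E; auto.
  apply shift_unshift_word in E.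
  unfold delta. destruct (Nat.eqb_spec (shift_word nu' w) (shift_word nu y)) as [E2|E2]; auto.
  exfalso.
  assert (G1 := f_equal grade E). assert (G2 := f_equal grade E2).
  rewrite !grade_shift_word in G1, G2.
  destruct (shift_word_prefix mu mu' y w) as [[|j r] [Hr Hyr]]; auto; try lia.
  - rewrite app_nil_r in Hr. subst mu'. simpl in Hyr. subst w.
    destruct (shift_word_prefix nu nu' y y) as [[|j2 r2] [Hr2 _]]; auto; try lia.
    + rewrite app_nil_r in Hr2. subst. auto.
    + subst nu'. rewrite length_app in G2. simpl in G2. lia.
  - subst mu'. rewrite length_app in G1. simpl in G1.
    destruct Hy as [Hy|Hy]; [lia|].
    apply Forall_app in H3. destruct H3 as [_ H3]. inversion H3; subst.
    apply (Hy j (shift_word r w)); auto.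
Qed.

Fixpoint coef (q : list nat * list nat) (L : list entry) : C :=
  match L with
  | [] => C0
  | (c, r) :: L' => Cadd (if word_pair_eq_dec r q then c else C0) (coef q L')
  end.

Lemma eval_lincomb_cons c mu nu L f x : eval rho (lincomb ((c, (mu, nu)) :: L)) f x =
  Cadd (Cmul c (eval rho (monomial mu nu) f x)) (eval rho (lincomb L) f x).
Proof. reflexivity. Qed.

Lemma eval_lincomb_probe y mu nu L : word_ok k mu -> word_ok k nu ->
  Forall (fun e => entry_ok k e /\ (length nu <= t_len e)%nat /\
     (t_len e = length nu \/ forall j x, idx_ok k j -> sg j x <> y)) L ->
  eval rho (lincomb L) (delta (shift_word nu y)) (shift_word mu y) = coef (mu, nu) L.
Proof.
  intros H1 H2 HL. induction HL as [|[c [mu' nu']] L [[E1 E2] [E3 E4]] HL IH].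
  - simpl. ring.
  - rewrite eval_lincomb_cons. simpl coef. rewrite IH. unfold t_len in E3, E4; simpl in E1, E2, E3, E4.
    rewrite eval_monomial_probe; auto.
    destruct (word_pair_eq_dec (mu', nu') (mu, nu)); ring.
Qed.

Definition other_monomial (q : list nat * list nat) (e : entry) : bool :=
  if word_pair_eq_dec (snd e) q then false else true.

Lemma lincomb_drop_zero_coef q L : coef q L = C0 ->
  aeq k (lincomb L) (lincomb (filter (other_monomial q) L)).
Proof.
  intro H0.
  transitivity (tadd (lincomb (filter (other_monomial q) L))
                     (tmul (tscal (coef q L)) (monomial (fst q) (snd q)))).
  2: { rewrite H0, aeq_mul0l. apply aeq_add0. }
  clear H0. induction L as [|[c [mu nu]] L IH]; simpl.
  - rewrite aeq_mul0l. symmetry. apply aeq_add0.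
  - unfold other_monomial at 1; simpl. destruct (word_pair_eq_dec (mu, nu) q) as [E|Hne]; simpl.
    + subst q. rewrite IH, <- aeq_scalDl, aeq_addA, (aeq_addC k _ (lincomb _)), aeq_addA.
      reflexivity.
    + replace (Cadd C0 (coef q L)) with (coef q L) by ring.
      rewrite IH, aeq_addA. reflexivity.
Qed.

Lemma filter_length_lt {A} (P : A -> bool) L e : In e L -> P e = false ->
  (length (filter P L) < length L)%nat.
Proof.
  induction L as [|a L IH]; simpl; [tauto|].
  intros [->|H] Hp.
  - rewrite Hp. pose proof (filter_length_le P L). lia.
  - destruct (P a); simpl; specialize (IH H Hp); lia.
Qed.

Lemma exists_min_t_len (L : list entry) : L <> [] ->
  exists e, In e L /\ forall e', In e' L -> (t_len e <= t_len e')%nat.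
Proof.
  induction L as [|a L IH]; [congruence|]. intros _.
  destruct L as [|b L].
  - exists a. split; [left; auto|]. intros e' [->|[]]. lia.
  - destruct IH as [e [He Hmin]]; [discriminate|].
    destruct (Nat.le_gt_cases (t_len a) (t_len e)).
    + exists a. split; [left; auto|]. intros e' [->|H']; [lia|]. specialize (Hmin e' H'). lia.
    + exists e. split; [right; auto|]. intros e' [->|H']; [lia|]. auto.
Qed.

(** A base point for probing: for L_d all t-words have the same length, and
    otherwise some point lies outside every range. *)
Lemma probe_base_point (L : list entry) n :
  (forall d, k = KL d -> forall e e', In e L -> In e' L -> t_len e = t_len e') ->
  (exists e0, In e0 L /\ t_len e0 = n) ->
  exists y, forall e, In e L -> t_len e = n \/ forall j x, idx_ok k j -> sg j x <> y.
Proof.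
  intros Hu [e0 [He0 Hn]]. destruct k as [d|d|] eqn:Ek.
  - exists 0%nat. intros e He. left. rewrite <- Hn. exact (Hu d eq_refl e e0 He He0).
  - destruct (br_miss _ _ _ Hbr) as [y0 Hy0]; [discriminate|].
    exists y0. intros; right; auto.
  - destruct (br_miss _ _ _ Hbr) as [y0 Hy0]; [discriminate|].
    exists y0. intros; right; auto.
Qed.

Lemma lincomb_zero_of_eval_zero n : forall L, (length L <= n)%nat -> Forall (entry_ok k) L ->
  (forall d, k = KL d -> forall e e', In e L -> In e' L -> t_len e = t_len e') ->
  (forall f, in_lp p f -> forall x, eval rho (lincomb L) f x = C0) ->
  aeq k (lincomb L) (tscal C0).
Proof.
  induction n as [|n IH]; intros L Hn Hok Hu Hz.
  { destruct L; [reflexivity|simpl in Hn; lia]. }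
  destruct L as [|e1 L1] eqn:EL; [reflexivity|]. rewrite <- EL in *.
  destruct (exists_min_t_len L) as [[c0 [mu nu]] [He0 Hmin]]; [congruence|].
  destruct (probe_base_point L (length nu) Hu) as [y Hy]; [exists (c0, (mu, nu)); auto|].
  rewrite Forall_forall in Hok. destruct (Hok _ He0) as [Hmu Hnu]; simpl in Hmu, Hnu.
  assert (Hc : coef (mu, nu) L = C0).
  { rewrite <- (eval_lincomb_probe y mu nu L); auto.
    - apply Hz, delta_lp.
    - apply Forall_forall. intros e' He'. auto. }
  pose proof (lincomb_drop_zero_coef (mu, nu) L Hc) as HL.
  rewrite HL. apply IH.
  - assert (length (filter (other_monomial (mu, nu)) L) < length L)%nat; [|lia].
    apply (filter_length_lt _ _ _ He0). unfold other_monomial; simpl.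
    destruct (word_pair_eq_dec (mu, nu) (mu, nu)); congruence.
  - apply Forall_forall. intros e' He'. apply filter_In in He'. apply Hok. tauto.
  - intros d Hd e e' He He'. apply filter_In in He. apply filter_In in He'.
    apply (Hu d Hd); tauto.
  - intros f Hf x. rewrite <- (aeq_sound _ _ HL). auto.
Qed.

(** Injectivity: a - b acting as 0 forces its normal form, hence a - b, to vanish. *)
Lemma shift_injective : rep_injective p k rho.
Proof.
  intros a b Ha Hb Heq. apply aeq_of_sub_zero.
  set (t := tadd a (tmul (tscal (Copp C1)) b)).
  destruct (uniform_normal_form k t ltac:(simpl; tauto)) as [L [Hok [HL Hu]]].
  rewrite HL. apply (lincomb_zero_of_eval_zero (length L)); auto.
  intros f Hf x. rewrite <- (aeq_sound _ _ HL). unfold t. simpl.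
  rewrite (Heq f Hf x). ring.
Qed.
End GradedShift.

Lemma graded_shift_representation k sg pre grade p :
  branching k sg pre -> (forall j x, grade (sg j x) = (grade x + 1)%Z) ->
  exists rho : gen -> op,
    is_rep p k rho /\ rep_injective p k rho /\ rep_free p k rho /\ rep_spatial p k rho.
Proof.
  intros Hbr Hgrade. exists (shift_rep sg pre). split; [|split; [|split]].
  - exact (shift_is_rep k sg pre Hbr p).
  - exact (shift_injective k sg pre grade Hbr Hgrade p).
  - exact (shift_free k sg pre grade Hbr Hgrade p).
  - intros j _. exact (shift_spatial k sg pre Hbr p j).
Qed.

(** ** Existence of branchings *)

(** N ~ Z x N: integers are coded by even/odd numbers, pairs by Cantor pairing. *)
Definition zenc (m : Z) : nat :=
  if Z.leb 0 m then (2 * Z.to_nat m)%nat else (2 * Z.to_nat (- m - 1) + 1)%nat.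
Definition zdec (n : nat) : Z :=
  if Nat.even n then Z.of_nat (Nat.div2 n) else (- Z.of_nat (Nat.div2 n) - 1)%Z.

Lemma zdec_zenc m : zdec (zenc m) = m.
Proof.
  unfold zenc, zdec. destruct (Z.leb_spec 0 m).
  - rewrite Nat.even_even, Nat.div2_double. lia.
  - rewrite Nat.even_odd, Nat.div2_odd'. lia.
Qed.

Lemma zenc_zdec n : zenc (zdec n) = n.
Proof.
  destruct (Nat.Even_or_Odd n) as [[t ->]|[t ->]]; unfold zdec, zenc.
  - rewrite Nat.even_even, Nat.div2_double. destruct (Z.leb_spec 0 (Z.of_nat t)); lia.
  - rewrite Nat.even_odd, Nat.div2_odd'. destruct (Z.leb_spec 0 (- Z.of_nat t - 1)); lia.
Qed.

Definition enc (m : Z) (b : nat) : nat := Cantor.to_nat (zenc m, b).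
Definition dec (x : nat) : Z * nat := let (a, b) := Cantor.of_nat x in (zdec a, b).

Lemma dec_enc m b : dec (enc m b) = (m, b).
Proof. unfold dec, enc. rewrite cancel_of_to, zdec_zenc. reflexivity. Qed.

Lemma enc_dec x : enc (fst (dec x)) (snd (dec x)) = x.
Proof.
  unfold dec, enc. destruct (Cantor.of_nat x) as [a b] eqn:E. cbn [fst snd].
  rewrite zenc_zdec, <- E. apply cancel_to_of.
Qed.

Section GradedLift.
Variables (f : nat -> nat -> nat) (finv : nat -> nat -> option nat).

Definition lift_sg (j x : nat) : nat := enc (fst (dec x) + 1) (f j (snd (dec x))).
Definition lift_pre (j y : nat) : option nat :=
  match finv j (snd (dec y)) with Some b => Some (enc (fst (dec y) - 1) b) | None => None end.
Definition lift_grade (x : nat) : Z := fst (dec x).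

Lemma lift_grade_sg j x : lift_grade (lift_sg j x) = (lift_grade x + 1)%Z.
Proof. unfold lift_grade, lift_sg. rewrite dec_enc. reflexivity. Qed.

Lemma lift_sg_enc j m b : lift_sg j (enc (m - 1) b) = enc m (f j b).
Proof.
  unfold lift_sg. rewrite dec_enc. simpl. f_equal. lia.
Qed.

Lemma lift_branching k : branching k f finv -> branching k lift_sg lift_pre.
Proof.
  intros [Hl Hr Hd Hc Hm]. split.
  - intros j x. unfold lift_pre, lift_sg. rewrite dec_enc. simpl. rewrite Hl. f_equal.
    replace (fst (dec x) + 1 - 1)%Z with (fst (dec x)) by lia. apply enc_dec.
  - intros j x y. unfold lift_pre.
    destruct (finv j (snd (dec y))) as [b|] eqn:E; [|discriminate].
    intro H. injection H as <-. rewrite lift_sg_enc, (Hr _ _ _ E). apply enc_dec.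
  - intros j j' x x' Hj Hj' E. unfold lift_sg in E.
    apply (f_equal dec) in E. rewrite !dec_enc in E. injection E. eauto.
  - intros d Hk y. destruct (Hc d Hk (snd (dec y))) as [j [b [Hj Hb]]].
    exists j, (enc (fst (dec y) - 1) b). split; auto.
    rewrite lift_sg_enc, Hb. apply enc_dec.
  - intro Hk. destruct (Hm Hk) as [b0 Hb0]. exists (enc 0 b0). intros j x Hj E.
    unfold lift_sg in E. apply (f_equal dec) in E. rewrite !dec_enc in E.
    injection E. intros ? _. eapply Hb0; eauto.
Qed.
End GradedLift.

(** For L_d: base-d digits, f_j b = d b + j. *)
Definition fL (d j b : nat) : nat := (d * b + j)%nat.
Definition finvL (d j b' : nat) : option nat :=
  if (Nat.leb j b' && Nat.eqb ((b' - j) mod d) 0)%bool then Some ((b' - j) / d)%nat else None.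

Lemma fL_branching d : (2 <= d)%nat -> branching (KL d) (fL d) (finvL d).
Proof.
  intro Hd. unfold fL, finvL. split.
  - intros j b. replace (d * b + j - j)%nat with (b * d)%nat by lia.
    rewrite Nat.Div0.mod_mul, Nat.div_mul by lia.
    destruct (Nat.leb_spec j (d * b + j)); [reflexivity|lia].
  - intros j b b'. destruct (Nat.leb_spec j b'); simpl; [|discriminate].
    destruct (Nat.eqb_spec ((b' - j) mod d) 0); [|discriminate].
    intro Hs. injection Hs as <-. pose proof (Nat.div_mod (b' - j) d ltac:(lia)). lia.
  - intros j j' b b' Hj Hj' E. unfold idx_ok in Hj, Hj'; simpl in Hj, Hj'.
    rewrite <- (Nat.mod_small j d Hj), <- (Nat.mod_small j' d Hj').
    rewrite <- (Nat.Div0.mod_add j b d), <- (Nat.Div0.mod_add j' b' d).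
    f_equal. lia.
  - intros d' Hd' b'. injection Hd' as <-.
    exists (b' mod d)%nat, (b' / d)%nat. split; [apply Nat.mod_upper_bound; lia|].
    symmetry. apply Nat.div_mod. lia.
  - intro H. exfalso. exact (H d eq_refl).
Qed.

(** For C_d and L_infty: f_j b = 1 + <j, b>, whose ranges all miss 0. *)
Definition fC (j b : nat) : nat := S (Cantor.to_nat (j, b)).
Definition finvC (j b' : nat) : option nat :=
  match b' with
  | 0%nat => None
  | S c => let (j', b) := Cantor.of_nat c in if Nat.eqb j' j then Some b else None
  end.

Lemma fC_branching k : (forall d, k <> KL d) -> branching k fC finvC.
Proof.
  intro Hk. unfold fC, finvC. split.
  - intros j b. rewrite cancel_of_to, Nat.eqb_refl. reflexivity.
  - intros j b [|c]; [discriminate|].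
    destruct (Cantor.of_nat c) as [j' b0] eqn:E.
    destruct (Nat.eqb_spec j' j); [|discriminate]. intro H; injection H as <-. subst j'.
    rewrite <- E, cancel_to_of. reflexivity.
  - intros j j' b b' _ _ E. apply Nat.succ_inj, (f_equal Cantor.of_nat) in E.
    rewrite !cancel_of_to in E. congruence.
  - intros d Hd. exfalso. exact (Hk d Hd).
  - intros _. exists 0%nat. intros j b _. discriminate.
Qed.

Lemma branching_exists k : kind_ok k -> exists f finv, branching k f finv.
Proof.
  destruct k as [d|d|]; simpl; intro Hk.
  - exists (fL d), (finvL d). apply fL_branching. exact Hk.
  - exists fC, finvC. apply fC_branching. discriminate.
  - exists fC, finvC. apply fC_branching. discriminate.
Qed.

Theorem corollary8p4 (k : kind) (p : R) :
  kind_ok k -> 1 <= p -> p <> 2 ->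
  exists rho : gen -> op,
    is_rep p k rho /\ rep_injective p k rho /\ rep_free p k rho /\ rep_spatial p k rho.
Proof.
  intros Hk _ _.
  destruct (branching_exists k Hk) as [f [finv Hf]].
  exact (graded_shift_representation k _ _ lift_grade p
           (lift_branching f finv k Hf) (lift_grade_sg f)).
Qed.
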